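(* Let $M$ be a smooth manifold of dimension $n$, let $\phi$ be a $1$-form on $M$ (not necessarily closed), let $t\in\mathbb{R}$, and let $F$ be a real-valued symmetric function ($F(a,b)=F(b,a)$) on $\{(a,b)\in\mathbb{Z}^2 \mid a+b\le n-1\}$. On $\mathfrak{h}=\bigoplus_{q=0}^{n}\Lambda^q T^*M$ define, for $\alpha\in\Lambda^aT^*M$ and $\beta\in\Lambda^bT^*M$, and extended bilinearly, $$[\alpha,\beta]_{t,\phi}=F(a,b)\,\alpha\wedge(t\phi)\wedge\beta .$$ Then $(\mathfrak{h},[\cdot,\cdot]_{t,\phi})$ is a Lie superalgebra.
   Context: $\Lambda^qT^*M$ denotes the space of smooth differential $q$-forms on $M$. In $\mathfrak{h}$ a $q$-form has degree $q'=-q-1$. A bracket on a $\mathbb{Z}$-graded space is a super bracket (making it a Lie superalgebra) if for homogeneous elements $P,Q,R$ of degrees $p',q',r'$: (super symmetry) $[P,Q]=-(-1)^{p'q'}[Q,P]$, and (super Jacobi identity) $[P,[Q,R]]=[[P,Q],R]+(-1)^{p'q'}[Q,[P,R]]$. *)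

From HB Require Import structures.
From mathcomp Require Import all_boot all_order all_algebra.
From mathcomp Require Export reals.
Set Implicit Arguments. Unset Strict Implicit. Unset Printing Implicit Defensive.
Import Order.TTheory GRing.Theory Num.Theory.
Local Open Scope ring_scope.

(* The algebra of differential forms  Omega(M) = (+)_{q=0}^n Lambda^q T^*M  of an
   n-dimensional manifold, modelled abstractly: an associative unital R-algebra A
   (multiplication = wedge product) together with the projections  pi q : A -> A
   onto the homogeneous components of form-degree q, satisfying the structural
   properties of the wedge product (grading, graded commutativity, top degree n). *)
Definition form_algebra (R : realType) (n : nat) (A : algType R)
    (pi : nat -> A -> A) : Prop :=
  [/\ (forall q (a : R) (x y : A), pi q (a *: x + y) = a *: pi q x + pi q y),
      (forall p q (x : A), pi p (pi q x) = if p == q then pi q x else 0),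
      (forall x : A, x = \sum_(q < n.+1) pi q x),
      (forall p q (x y : A), pi (p + q)%N (pi p x * pi q y) = pi p x * pi q y) &
      (forall p q (x y : A),
          pi p x * pi q y = (-1) ^+ (p * q) *: (pi q y * pi p x))].

(* The Z-grading of h: a q-form (0 <= q <= n) has degree q' = -q-1.
   hdeg d x  means  x is homogeneous of degree d in h. *)
Definition hdeg (R : realType) (n : nat) (A : algType R) (pi : nat -> A -> A)
    (d : int) (x : A) : Prop :=
  if (d <= -1) && (- d - 1 <= n%:Z) then pi `|- d - 1|%N x = x else x = 0.

Definition br_tphi (R : realType) (n : nat) (A : algType R) (pi : nat -> A -> A)
    (F : int -> int -> R) (t : R) (phi : A) (x y : A) : A :=
  \sum_(a < n.+1) \sum_(b < n.+1)
     F (a : nat)%:Z (b : nat)%:Z *: (pi a x * (t *: phi) * pi b y).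

Definition lie_superalgebra (R : realType) (V : lmodType R)
    (hom : int -> V -> Prop) (br : V -> V -> V) : Prop :=
  [/\ (forall (a : R) (x y z : V), br (a *: x + y) z = a *: br x z + br y z),
      (forall (a : R) (x y z : V), br z (a *: x + y) = a *: br z x + br z y),
      (forall p q (P Q : V), hom p P -> hom q Q -> hom (p + q) (br P Q)),
      (forall p q (P Q : V), hom p P -> hom q Q ->
          br P Q = - ((-1) ^+ `|(p * q)%R|%N *: br Q P)) &
      (forall p q r (P Q R' : V), hom p P -> hom q Q -> hom r R' ->
          br P (br Q R') = br (br P Q) R' + (-1) ^+ `|(p * q)%R|%N *: br Q (br P R'))].

From HB Require Import structures.
From mathcomp Require Import all_boot all_order all_algebra reals.
From mathcomp Require Import zify ring.
Import Order.TTheory GRing.Theory Num.Theory.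
Local Open Scope ring_scope.

(* Since phi is a 1-form, graded commutativity gives phi /\ alpha /\ phi = 0 for
   every homogeneous alpha.  Every double bracket contains such a factor, so all
   three terms of the super Jacobi identity vanish.  For super symmetry, swapping
   alpha and beta in alpha /\ phi /\ beta costs (-1)^(ab+a+b) = -(-1)^(a'b'),
   where a' = -a-1 and b' = -b-1; and F is symmetric wherever it matters, since
   forms of degree a+1+b > n vanish. *)

Section FormAlgebra.

Context {R : realType} {n : nat} {A : algType R} { pi : nat -> A -> A }.
Hypothesis HA : form_algebra n pi.

Lemma piD q (x y : A) : pi q (x + y) = pi q x + pi q y.
Proof. by case: HA => lin _ _ _ _; have := lin q 1 x y; rewrite !scale1r. Qed.

Lemma pi0 q : pi q 0 = 0.
Proof. by apply: (addrI (pi q 0)); rewrite addr0 -piD addr0. Qed.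

Lemma piZ q (c : R) (x : A) : pi q (c *: x) = c *: pi q x.
Proof. by case: HA => lin _ _ _ _; rewrite -[c *: x]addr0 lin pi0 addr0. Qed.

Lemma pi_sum q m (f : 'I_m -> A) : pi q (\sum_(i < m) f i) = \sum_(i < m) pi q (f i).
Proof. exact: (big_morph (pi q) (piD q) (pi0 q)). Qed.

Lemma pi_idem p q (x : A) : pi p (pi q x) = if p == q then pi q x else 0.
Proof. by case: HA. Qed.

Lemma pi_mul p q (x y : A) : pi (p + q) (pi p x * pi q y) = pi p x * pi q y.
Proof. by case: HA. Qed.

Lemma pi_mulC p q (x y : A) : pi p x * pi q y = (-1) ^+ (p * q) *: (pi q y * pi p x).
Proof. by case: HA. Qed.

Lemma pi_gt_eq0 [m] [x : A] : (n < m)%N -> pi m x = x -> x = 0.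
Proof.
move=> n_lt_m xm; case: (HA) => _ _ decomp _ _.
rewrite (decomp x); apply: big1 => q _; rewrite -xm pi_idem.
by case: eqP => // q_m; move: (ltn_ord q); rewrite q_m; lia.
Qed.

Lemma sum_pi_homog (G : nat -> A -> A) [a] [x : A] :
  (a <= n)%N -> pi a x = x -> (forall i, G i 0 = 0) ->
  \sum_(i < n.+1) G i (pi i x) = G a x.
Proof.
rewrite -ltnS => a_lt xa G0; rewrite (bigD1 (Ordinal a_lt)) //= xa big1 ?addr0 //.
by move=> i i_a; rewrite -xa pi_idem ifN ?G0 //; exact: i_a.
Qed.

Lemma hdeg0 d : hdeg n pi d 0.
Proof. by rewrite /hdeg; case: ifP; rewrite ?pi0. Qed.

Lemma hdeg_pi a (x : A) : pi a x = x -> hdeg n pi (- a%:Z - 1) x.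
Proof.
move=> xa; have [a_le|n_lt] := leqP a n.
  by rewrite /hdeg ifT; [have -> : `|- (- a%:Z - 1) - 1|%N = a by lia | apply/andP; lia].
by rewrite (pi_gt_eq0 n_lt xa); apply: hdeg0.
Qed.

Lemma hdegP d (x : A) : hdeg n pi d x ->
  x = 0 \/ exists2 a, (a <= n)%N & d = - a%:Z - 1 /\ pi a x = x.
Proof.
rewrite /hdeg; case: ifP => [/andP[d_neg d_le] xd | _ x0]; last by left.
by right; exists `|- d - 1|%N; [lia | split=> //; lia].
Qed.

Context {phi : A}.
Hypothesis phi1 : pi 1 phi = phi.

Lemma mul_phiphi : phi * phi = 0.
Proof.
have phi2N : phi * phi = - (phi * phi).
  by have := pi_mulC 1 1 phi phi; rewrite phi1 expr1 scaleN1r.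
have : (2%:R : R) *: (phi * phi) = 0 by rewrite scaler_nat mulr2n {1}phi2N addNr.
by move/eqP; rewrite scaler_eq0 pnatr_eq0 => /eqP.
Qed.

Lemma phi_sandwich a (x : A) : phi * pi a x * phi = 0.
Proof.
by rewrite -{1}phi1 pi_mulC phi1 -scalerAl -mulrA mul_phiphi mulr0 scaler0.
Qed.

Lemma pi_wedge a b (x y : A) :
  pi (a + 1 + b) (pi a x * phi * pi b y) = pi a x * phi * pi b y.
Proof. by rewrite -{1 2}phi1 -(pi_mul a 1) pi_mul. Qed.

Lemma wedge_swap a b (x y : A) :
  pi b y * phi * pi a x = - ((-1) ^+ (a.+1 * b.+1) *: (pi a x * phi * pi b y)).
Proof.
have phiy : pi (1 + b) (phi * pi b y) = phi * pi b y by rewrite -{1 2}phi1 pi_mul.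
have yphi : pi b y * phi = (-1) ^+ (b * 1) *: (phi * pi b y).
  by rewrite -{1}phi1 pi_mulC phi1.
have phiyx : phi * pi b y * pi a x = (-1) ^+ ((1 + b) * a) *: (pi a x * (phi * pi b y)).
  by rewrite -phiy pi_mulC.
rewrite yphi -scalerAl phiyx scalerA mulrA -scaleNr -exprD.
have -> : (a.+1 * b.+1 = (b * 1 + (1 + b) * a).+1)%N by ring.
by rewrite exprS mulN1r opprK.
Qed.

Context {F : int -> int -> R} {t : R}.
Local Notation br := (br_tphi n pi F t phi).

Lemma br_tphiE (x y : A) :
  br x y = \sum_(a < n.+1) \sum_(b < n.+1)
             (F a%:Z b%:Z * t) *: (pi a x * phi * pi b y).
Proof.
apply: eq_bigr => a _; apply: eq_bigr => b _.
by rewrite -scalerAr -scalerAl scalerA.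
Qed.

Lemma brDl (c : R) (x y z : A) : br (c *: x + y) z = c *: br x z + br y z.
Proof.
rewrite !br_tphiE scaler_sumr -big_split; apply: eq_bigr => a _.
rewrite scaler_sumr -big_split; apply: eq_bigr => b _.
by rewrite piD piZ !mulrDl -!scalerAl scalerDr !scalerA mulrC.
Qed.

Lemma brDr (c : R) (x y z : A) : br z (c *: x + y) = c *: br z x + br z y.
Proof.
rewrite !br_tphiE scaler_sumr -big_split; apply: eq_bigr => a _.
rewrite scaler_sumr -big_split; apply: eq_bigr => b _.
by rewrite piD piZ mulrDr -scalerAr scalerDr !scalerA mulrC.
Qed.

Lemma br0l (z : A) : br 0 z = 0.
Proof. by apply: big1 => a _; apply: big1 => b _; rewrite pi0 !mul0r scaler0. Qed.

Lemma br0r (z : A) : br z 0 = 0.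
Proof. by apply: big1 => a _; apply: big1 => b _; rewrite pi0 !mulr0 scaler0. Qed.

Lemma br_homog [a b] [x y : A] : (a <= n)%N -> (b <= n)%N ->
  pi a x = x -> pi b y = y -> br x y = (F a%:Z b%:Z * t) *: (x * phi * y).
Proof.
move=> a_le b_le xa yb; rewrite br_tphiE.
rewrite (sum_pi_homog (fun i u => \sum_(j < n.+1) (F i%:Z j%:Z * t) *: (u * phi * pi j y))
  a_le xa); last by move=> i; apply: big1 => j _; rewrite !mul0r scaler0.
rewrite (sum_pi_homog (fun j u => (F a%:Z j%:Z * t) *: (x * phi * u)) b_le yb) // => j.
by rewrite mulr0 scaler0.
Qed.

Lemma hdeg_br p q (x y : A) :
  hdeg n pi p x -> hdeg n pi q y -> hdeg n pi (p + q) (br x y).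
Proof.
case/hdegP=> [->|[a a_le [-> xa]]]; first by rewrite br0l => _; apply: hdeg0.
case/hdegP=> [->|[b b_le [-> yb]]]; first by rewrite br0r; apply: hdeg0.
rewrite (br_homog a_le b_le xa yb).
have -> : - a%:Z - 1 + (- b%:Z - 1) = - (a + 1 + b)%N%:Z - 1 by lia.
by apply: hdeg_pi; rewrite piZ -{1}xa -{1}yb pi_wedge xa yb.
Qed.

Lemma phi_mul_pi_wedge d a b (x y : A) : phi * pi d (pi a x * phi * pi b y) = 0.
Proof.
rewrite -pi_wedge pi_idem pi_wedge; case: eqP => _; last by rewrite mulr0.
by rewrite !mulrA phi_sandwich !mul0r.
Qed.

Lemma pi_wedge_mul_phi d a b (x y : A) : pi d (pi a x * phi * pi b y) * phi = 0.
Proof.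
rewrite -pi_wedge pi_idem pi_wedge; case: eqP => _; last by rewrite mul0r.
by rewrite -!mulrA (mulrA phi) phi_sandwich !mulr0.
Qed.

Lemma br_brr_eq0 (x y z : A) : br x (br y z) = 0.
Proof.
rewrite br_tphiE; apply: big1 => a _; apply: big1 => b _.
rewrite br_tphiE pi_sum mulr_sumr big1 ?mulr0 ?scaler0 // => a' _.
rewrite pi_sum mulr_sumr big1 // => b' _.
by rewrite piZ -scalerAr -[pi a x * phi * _]mulrA phi_mul_pi_wedge mulr0 scaler0.
Qed.

Lemma br_brl_eq0 (x y z : A) : br (br x y) z = 0.
Proof.
rewrite br_tphiE; apply: big1 => a _; apply: big1 => b _.
rewrite br_tphiE pi_sum mulr_suml big1 ?mul0r ?scaler0 // => a' _.
rewrite pi_sum mulr_suml big1 // => b' _.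
by rewrite piZ -scalerAl pi_wedge_mul_phi scaler0.
Qed.

Hypothesis HF : forall a b : int, a + b <= n%:Z - 1 -> F a b = F b a.

Lemma br_supersym p q (x y : A) : hdeg n pi p x -> hdeg n pi q y ->
  br x y = - ((-1) ^+ `|(p * q)%R|%N *: br y x).
Proof.
case/hdegP=> [->|[a a_le [-> xa]]]; first by rewrite br0l br0r scaler0 oppr0.
case/hdegP=> [->|[b b_le [-> yb]]]; first by rewrite br0l br0r scaler0 oppr0.
have -> : `|((- a%:Z - 1) * (- b%:Z - 1))%R|%N = (a.+1 * b.+1)%N.
  by apply/eqP; rewrite -eqz_nat abszE ger0_norm //; apply/eqP; lia.
rewrite (br_homog a_le b_le xa yb) (br_homog b_le a_le yb xa).
have := wedge_swap a b x y; rewrite xa yb => ->.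
have [ab_le|n_lt] := leqP (a + 1 + b) n.
  rewrite -(HF a%:Z b%:Z); last by lia.
  rewrite !scalerN opprK !scalerA; congr (_ *: _).
  set s := (-1) ^+ _; have s2 : s * s = 1 by rewrite -expr2 sqrr_sign.
  by rewrite -[LHS]mulr1 -s2; ring.
have wedge0 : x * phi * y = 0 by apply: (pi_gt_eq0 n_lt); rewrite -xa -yb pi_wedge.
by rewrite wedge0 !(scaler0, oppr0).
Qed.

End FormAlgebra.

Theorem mainTheorem1 (R : realType) (n : nat) (A : algType R)
    (pi : nat -> A -> A) (HA : form_algebra n pi)
    (phi : A) (Hphi : pi 1%N phi = phi) (t : R)
    (F : int -> int -> R)
    (HF : forall a b : int, a + b <= n%:Z - 1 -> F a b = F b a) :
  lie_superalgebra (hdeg n pi) (br_tphi n pi F t phi).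
Proof.
split.
- exact: brDl.
- exact: brDr.
- exact: hdeg_br.
- exact: br_supersym.
- move=> p q r x y z _ _ _.
  by rewrite !(br_brr_eq0 HA Hphi) (br_brl_eq0 HA Hphi) scaler0 addr0.
Qed.
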